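(* Let $E$ be a finite set and $\mathcal{O}\subseteq\{+,-,0\}^E$ satisfy (O3): $X,Y\in\mathcal{O}\Rightarrow X\circ Y\in\mathcal{O}$. Then $\mathcal{O}$ satisfies (O4) if and only if it satisfies (O4'), where (O4): if $X,Y\in\mathcal{O}$ with $\underline{X}=\underline{Y}$ and $X\neq Y$, then $I_e(X,Y)\cap\mathcal{O}\neq\emptyset$ for all $e\in S(X,Y)$; (O4'): if $X,Y\in\mathcal{O}$ with $\underline{X}=\underline{Y}$ and $X\neq Y$, then $I(X,Y)\cap\mathcal{O}\neq\emptyset$.
   Context: For $X\in\{+,-,0\}^E$: support $\underline{X}=\{e:X_e\neq0\}$; composition $(X\circ Y)_e=X_e$ if $X_e\neq0$, else $Y_e$; separation set $S(X,Y)=\{e: X_e,Y_e\neq0, X_e\neq Y_e\}$. For $X,Y$ with $\underline{X}=\underline{Y}$, $X\neq Y$ and $e\in S(X,Y)$: $I_e(X,Y)=\{V\in\{+,-,0\}^E : \underline{V}\subseteq\underline{X}\setminus\{e\},\ V_f=X_f\ \forall f\notin S(X,Y)\}$ and $I(X,Y)=\bigcup_{e\in S(X,Y)}I_e(X,Y)$. *)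

From mathcomp Require Import all_boot.
Set Implicit Arguments. Unset Strict Implicit. Unset Printing Implicit Defensive.

Inductive sign := Plus | Minus | Zero.

Definition signvec (E : finType) := E -> sign.

Definition supp (E : finType) (X : signvec E) : E -> Prop := fun e => X e <> Zero.

Definition comp (E : finType) (X Y : signvec E) : signvec E :=
  fun e => match X e with Zero => Y e | s => s end.

Definition sep (E : finType) (X Y : signvec E) (e : E) : Prop :=
  X e <> Zero /\ Y e <> Zero /\ X e <> Y e.

Definition Ie (E : finType) (X Y : signvec E) (e : E) (V : signvec E) : Prop :=
  (forall f, V f <> Zero -> X f <> Zero /\ f <> e) /\
  (forall f, ~ sep X Y f -> V f = X f).

Definition Iu (E : finType) (X Y : signvec E) (V : signvec E) : Prop :=
  exists e, sep X Y e /\ Ie X Y e V.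

Definition O3 (E : finType) (O : signvec E -> Prop) : Prop :=
  forall X Y, O X -> O Y -> O (comp X Y).

Definition O4 (E : finType) (O : signvec E -> Prop) : Prop :=
  forall X Y, O X -> O Y -> (forall f, supp X f <-> supp Y f) -> X <> Y ->
    forall e, sep X Y e -> exists V, Ie X Y e V /\ O V.

Definition O4' (E : finType) (O : signvec E -> Prop) : Prop :=
  forall X Y, O X -> O Y -> (forall f, supp X f <-> supp Y f) -> X <> Y ->
    exists V, Iu X Y V /\ O V.

From Pilot Require Import Defs.
From mathcomp Require Import all_boot.
From Stdlib Require Import Classical FunctionalExtensionality.
Set Implicit Arguments. Unset Strict Implicit. Unset Printing Implicit Defensive.

(* (O4) => (O4') is immediate, since X <> Y with equal supports forces S(X,Y)
   to be nonempty. For the converse, induct on |S(X,Y)|. (O4') yields V in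
   O /\ I_f(X,Y) for some f in S(X,Y). If V_e = 0 then V is already in I_e(X,Y).
   If V_e = Y_e, the vector W = V o X lies in O by (O3), has the support of X,
   still separates X from it at e, and S(X,W) is contained in S(X,Y) \ {f};
   by induction some U in O lies in I_e(X,W), which is contained in I_e(X,Y).
   The case V_e = X_e is the same with X and Y exchanged, because for equal
   supports I_e(X,Y) = I_e(Y,X). *)

Section SignVectors.

Variable E : finType.
Implicit Types (X Y V : signvec E) (e f : E).

Definition sepb X Y f : bool :=
  match X f, Y f with Plus, Minus | Minus, Plus => true | _, _ => false end.

Lemma sepP X Y f : reflect (sep X Y f) (sepb X Y f).
Proof. by rewrite /sep /sepb; case: (X f); case: (Y f); constructor; intuition. Qed.

Lemma sep_sym X Y f : sep X Y f -> sep Y X f.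
Proof. by rewrite /sep; intuition. Qed.

Lemma sep_neq X Y e : sep X Y e -> X <> Y.
Proof. by move=> [_ [_ neXY]] eqXY; rewrite eqXY in neXY. Qed.

Lemma sep_cases X Y e (s : sign) : sep X Y e -> [\/ s = Zero, s = X e | s = Y e].
Proof.
rewrite /sep; case: (X e); case: (Y e); case: s; intuition;
  by [constructor 1 | constructor 2 | constructor 3].
Qed.

Lemma supp_nsep_eq X Y f : (supp X f <-> supp Y f) -> ~ sep X Y f -> X f = Y f.
Proof.
by rewrite /supp /sep; case: (X f); case: (Y f) => //; intuition congruence.
Qed.

Lemma exists_sep X Y :
  (forall f, supp X f <-> supp Y f) -> X <> Y -> exists e, sep X Y e.
Proof.
move=> suppXY neXY; apply: NNPP => nosep; apply: neXY.
apply: functional_extensionality => f.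
by apply: supp_nsep_eq (suppXY f) _ => sepf; apply: nosep; exists f.
Qed.

Definition nsep X Y := #|[pred f | sepb X Y f]|.

Lemma nsep_sym X Y : nsep X Y = nsep Y X.
Proof.
apply: eq_card => f; rewrite !inE.
by apply/sepP/sepP; apply: sep_sym.
Qed.

Lemma nsep_lt X Y X' Y' e :
  (forall f, sep X' Y' f -> sep X Y f) -> sep X Y e -> ~ sep X' Y' e ->
  nsep X' Y' < nsep X Y.
Proof.
move=> sub sepe nsepe; apply/proper_card/properP; split.
  by apply/subsetP => f; rewrite !inE => /sepP /sub /sepP.
by exists e; rewrite !inE; [apply/sepP | apply/sepP].
Qed.

Lemma Ie_zero X Y e V : Ie X Y e V -> V e = Zero.
Proof. by case=> suppV _; case Ve: (V e) => //; case: (suppV e); rewrite ?Ve. Qed.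

Lemma Ie_move X Y e e' V : Ie X Y e' V -> V e = Zero -> Ie X Y e V.
Proof.
move=> [suppV offV] Ve; split=> // f Vf; split; first by case: (suppV f Vf).
by move=> fe; rewrite fe Ve in Vf.
Qed.

Lemma Ie_sym X Y e V :
  (forall f, supp X f <-> supp Y f) -> Ie X Y e V -> Ie Y X e V.
Proof.
move=> suppXY [suppV offV]; split=> f.
  by move=> /suppV [Xf fe]; split=> //; apply/(suppXY f).
move=> nsepf; have nsepf' : ~ sep X Y f by move/sep_sym.
by rewrite offV // (supp_nsep_eq (suppXY f)).
Qed.

Lemma Ie_sep_sub X Y Y' e V :
  (forall f, sep X Y' f -> sep X Y f) -> Ie X Y' e V -> Ie X Y e V.
Proof. by move=> sub [suppV offV]; split=> // f nsepf; apply: offV => /sub. Qed.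

Lemma supp_comp X V :
  (forall f, V f <> Zero -> X f <> Zero) ->
  forall f, supp (Defs.comp V X) f <-> supp X f.
Proof.
move=> suppV f; move: (suppV f); rewrite /supp /Defs.comp.
by case: (V f); case: (X f) => //=; intuition congruence.
Qed.

Lemma sep_comp_sub X Y e V :
  Ie X Y e V -> forall f, sep X (Defs.comp V X) f -> sep X Y f.
Proof.
move=> [_ offV] f sepf; apply: NNPP => nsepf; move: sepf.
by rewrite /sep /Defs.comp (offV f nsepf); case: (X f); intuition.
Qed.

Lemma sep_comp X Y V e : sep X Y e -> V e = Y e -> sep X (Defs.comp V X) e.
Proof.
move=> [Xe [Ye neXY]] Ve; rewrite /sep /Defs.comp Ve.
by case: (Y e) Ye neXY; intuition congruence.
Qed.

Lemma nsep_comp_lt X Y V e :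
  Ie X Y e V -> sep X Y e -> nsep X (Defs.comp V X) < nsep X Y.
Proof.
move=> IeV sepe; apply: (nsep_lt (sep_comp_sub IeV) sepe).
by rewrite /sep /Defs.comp (Ie_zero IeV); intuition.
Qed.

Section FromO4'.

Variable O : signvec E -> Prop.
Hypothesis O3O : O3 O.

Lemma Ie_comp_step X Y V e' e :
  O X -> O V -> (forall f, supp X f <-> supp Y f) ->
  Ie X Y e' V -> sep X Y e' -> sep X Y e -> V e = Y e ->
  (forall X' Y', nsep X' Y' < nsep X Y -> O X' -> O Y' ->
     (forall f, supp X' f <-> supp Y' f) -> sep X' Y' e ->
     exists U, Ie X' Y' e U /\ O U) ->
  exists U, Ie X Y e U /\ O U.
Proof.
move=> OX OV suppXY IeV sepe' sepe Ve IH.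
have suppW : forall f, supp X f <-> supp (Defs.comp V X) f.
  by move=> f; apply: iff_sym; apply: supp_comp => g /(proj1 IeV) [].
have [U [IeU OU]] := IH X (Defs.comp V X) (nsep_comp_lt IeV sepe') OX (O3O OV OX)
  suppW (sep_comp sepe Ve).
by exists U; split=> //; apply: Ie_sep_sub IeU; apply: sep_comp_sub IeV.
Qed.

Hypothesis O4'O : O4' O.

Lemma O4'_Ie n X Y e :
  nsep X Y < n -> O X -> O Y -> (forall f, supp X f <-> supp Y f) ->
  sep X Y e -> exists U, Ie X Y e U /\ O U.
Proof.
elim: n X Y => // n IH X Y lt_n OX OY suppXY sepe.
have IH' X' Y' : nsep X' Y' < nsep X Y -> O X' -> O Y' ->
    (forall f, supp X' f <-> supp Y' f) -> sep X' Y' e ->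
    exists U, Ie X' Y' e U /\ O U.
  by move=> lt; apply: IH; apply: leq_trans lt lt_n.
have [V [[e' [sepe' IeV]] OV]] := O4'O OX OY suppXY (sep_neq sepe).
have suppYX f : supp Y f <-> supp X f by apply: iff_sym.
case: (sep_cases (V e) sepe) => Ve.
- by exists V; split=> //; apply: Ie_move IeV Ve.
- rewrite nsep_sym in IH'.
  have [U [IeU OU]] := Ie_comp_step OY OV suppYX (Ie_sym suppXY IeV)
    (sep_sym sepe') (sep_sym sepe) Ve IH'.
  by exists U; split=> //; apply: Ie_sym.
- exact: (Ie_comp_step OX OV suppXY IeV sepe' sepe Ve IH').
Qed.

End FromO4'.

End SignVectors.

Theorem lemma2p1 (E : finType) (O : signvec E -> Prop) :
  O3 O -> (O4 O <-> O4' O).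
Proof.
move=> O3O; split=> [O4O X Y OX OY suppXY neXY | O4'O X Y OX OY suppXY _ e sepe].
- have [e sepe] := exists_sep suppXY neXY.
  have [V [IeV OV]] := O4O X Y OX OY suppXY neXY e sepe.
  by exists V; split=> //; exists e.
- exact: (O4'_Ie O3O O4'O (ltnSn (nsep X Y))).
Qed.
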